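(* Let $T$ be a tree with $m$ edges, with the notation $T_A, T_B, t_1,\ldots,t_{a+b}, T(1),\ldots,T(a+b)$ fixed as in the context. Let $G$ be a bipartite graph on vertex classes $A$ and $B$. If $G$ admits a $T$-equitable edge-colouring, then $G$ has a $T^*$-decomposition.
   Context: All graphs are finite and loopless but may have multiple edges. Let $T$ be a tree with $m$ edges and let $T_A$, $T_B$ be the two vertex classes of a proper $2$-colouring of $T$, chosen so that $T_B$ contains a leaf of $T$. Denote the non-leaves of $T$ in $T_A$ by $t_1,\ldots,t_a$ and the non-leaves in $T_B$ by $t_{a+1},\ldots,t_{a+b}$. Colour the edges of $T$ with colours $1,\ldots,m$ so that distinct edges get distinct colours, and for $i\in\{1,\ldots,a+b\}$ let $T(i)$ be the set of colours of edges incident with $t_i$. For an edge-colouring of $G$ and a vertex $v$, $d_j(v)$ is the number of edges of colour $j$ at $v$. An edge-colouring of a bipartite graph $G$ with classes $A,B$ using colours $1,\ldots,m$ is $T$-equitable if (i) for every $v\in A$, $i\in\{1,\ldots,a\}$ and $j,k\in T(i)$ we have $d_j(v)=d_k(v)$, and (ii) for every $v\in B$, $i\in\{a+1,\ldots,a+b\}$ and $j,k\in T(i)$ we have $d_j(v)=d_k(v)$. A homomorphic copy of $T$ is a graph obtained from $T$ by identifying some vertices and keeping all edges; a $T^*$-decomposition of $G$ is a partition of $E(G)$ into subgraphs that are homomorphic copies of $T$. *)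

From mathcomp Require Import all_boot.
Set Implicit Arguments. Unset Strict Implicit. Unset Printing Implicit Defensive.

(* A bipartite (multi)graph with classes VA, VB and edge set E is given by two
   endpoint maps ea : E -> VA and eb : E -> VB (edge e joins ea e and eb e).
   The tree T has vertex classes TA, TB, and its edge set is 'I_m; the
   (bijective) colouring of the edges of T by the m colours is the identity
   (colours 1..m are represented by 'I_m, i.e. 0..m-1). *)

Section Defs.
Variables (VA VB E : finType) (ea : E -> VA) (eb : E -> VB).

Definition badj (D : {set E}) : rel (VA + VB) :=
  fun x y => [exists e in D,
     ((x == inl (ea e)) && (y == inr (eb e))) ||
     ((y == inl (ea e)) && (x == inr (eb e)))].

Definition bconnected : Prop :=
  forall x y : VA + VB, connect (badj [set: E]) x y.

Definition bacyclic : Prop :=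
  forall e : E, ~~ connect (badj (setT :\ e)) (inl (ea e)) (inr (eb e)).

Definition is_tree : Prop := bconnected /\ bacyclic.

Definition bdeg (x : VA + VB) : nat :=
  #|[set e : E | (x == inl (ea e)) || (x == inr (eb e))]|.

Definition is_leaf (x : VA + VB) : bool := bdeg x == 1.
End Defs.

Definition dcolA (VA E : finType) (ea : E -> VA) (m : nat)
  (col : E -> 'I_m) (v : VA) (j : 'I_m) : nat :=
  #|[set e : E | (ea e == v) && (col e == j)]|.
Definition dcolB (VB E : finType) (eb : E -> VB) (m : nat)
  (col : E -> 'I_m) (v : VB) (j : 'I_m) : nat :=
  #|[set e : E | (eb e == v) && (col e == j)]|.

(* T-equitable edge-colouring; T(i) for a non-leaf t_i is the set of colours
   (= edges) incident with t_i. *)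
Definition T_equitable (TA TB : finType) (m : nat) (ta : 'I_m -> TA)
  (tb : 'I_m -> TB) (VA VB E : finType) (ea : E -> VA) (eb : E -> VB)
  (col : E -> 'I_m) : Prop :=
  (forall (v : VA) (t : TA), ~~ is_leaf ta tb (inl t) ->
     forall j k : 'I_m, ta j = t -> ta k = t ->
       dcolA ea col v j = dcolA ea col v k) /\
  (forall (v : VB) (t : TB), ~~ is_leaf ta tb (inr t) ->
     forall j k : 'I_m, tb j = t -> tb k = t ->
       dcolB eb col v j = dcolB eb col v k).

Definition hom_copy (TA TB : finType) (m : nat) (ta : 'I_m -> TA)
  (tb : 'I_m -> TB) (VA VB E : finType) (ea : E -> VA) (eb : E -> VB)
  (S : {set E}) : Prop :=
  exists (phi : 'I_m -> E) (f : TA + TB -> VA + VB),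
    [/\ injective phi, [set phi i | i : 'I_m] = S &
      forall i : 'I_m,
        (f (inl (ta i)) = inl (ea (phi i)) /\ f (inr (tb i)) = inr (eb (phi i)))
     \/ (f (inl (ta i)) = inr (eb (phi i)) /\ f (inr (tb i)) = inl (ea (phi i)))].

Definition Tstar_decomposition (TA TB : finType) (m : nat) (ta : 'I_m -> TA)
  (tb : 'I_m -> TB) (VA VB E : finType) (ea : E -> VA) (eb : E -> VB) : Prop :=
  exists P : {set {set E}}, partition P [set: E] /\
    forall S, S \in P -> hom_copy ta tb ea eb S.

From mathcomp Require Import all_boot zify.
Set Implicit Arguments. Unset Strict Implicit. Unset Printing Implicit Defensive.

(* Number the edges of each colour j at each vertex v of G.  For a vertex t
   of T and colours j, k in T(t), equitability makes the numberings of colour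
   j and of colour k at v equally long, so the edges at v with colours in T(t)
   and a given number form a star with exactly one edge of each colour of
   T(t).  Glue two edges when they lie in a common star; the gluing classes
   are the copies of T.  A walk through a class projects to a walk in T, so,
   T being connected, a class contains every colour, and, T being acyclic, a
   walk can come back to a colour only through the edge it started from. *)

Section BipartiteGraph.
Variables (VA VB E : finType) (ea : E -> VA) (eb : E -> VB).

Definition bend (b : bool) (e : E) : VA + VB :=
  if b then inl (ea e) else inr (eb e).

Lemma bend_side b b' e e' : bend b e = bend b' e' -> b = b'.
Proof. by case: b; case: b'. Qed.

Lemma badj_sym (D : {set E}) : symmetric (badj ea eb D).
Proof. by move=> x y; apply/existsP/existsP => -[e he]; exists e; rewrite orbC. Qed.

Lemma connect_bend (D : {set E}) e b b' :
  e \in D -> connect (badj ea eb D) (bend b e) (bend b' e).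
Proof.
by move=> De; case: b; case: b' => //=; apply: connect1; apply/existsP; exists e;
  rewrite De !eqxx ?orbT.
Qed.

Lemma bacyclic_bend e b : bacyclic ea eb ->
  ~~ connect (badj ea eb (setT :\ e)) (bend b e) (bend (~~ b) e).
Proof.
move=> acyc; case: b => /=; first exact: acyc.
by rewrite (sym_connect_sym (@badj_sym _)); exact: acyc.
Qed.

Lemma bend_not_leaf b e e' :
  e != e' -> bend b e = bend b e' -> ~~ is_leaf ea eb (bend b e).
Proof.
move=> neq_ee' same_end; rewrite /is_leaf /bdeg; apply/negP => /eqP deg1.
suff : #|[set e; e']| <= 1 by rewrite cards2 neq_ee'.
rewrite -deg1; apply: subset_leq_card; apply/subsetP => x.
rewrite !inE => /orP[] /eqP ->; [|rewrite same_end];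
  by case: (b); rewrite /= eqxx ?orbT.
Qed.

End BipartiteGraph.

Section Gluing.
Variables (TA TB : finType) (m : nat) (ta : 'I_m -> TA) (tb : 'I_m -> TB).
Variables (VA VB E : finType) (ea : E -> VA) (eb : E -> VB) (col : E -> 'I_m).
Hypothesis treeT : is_tree ta tb.
Hypothesis equitable_col : T_equitable ta tb ea eb col.

Local Notation tend := (bend ta tb).
Local Notation gend := (bend ea eb).
Local Notation Tadj := (badj ta tb).

Definition colour_class b v (j : 'I_m) : {set E} :=
  [set e | (gend b e == v) && (col e == j)].

Definition rank b e : nat := index e (enum (colour_class b (gend b e) (col e))).

Definition state b e := (gend b e, rank b e, tend b (col e)).

Definition glued : rel E :=
  fun e e' => (state true e == state true e') || (state false e == state false e').

Lemma glued_sym : symmetric glued.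
Proof. by move=> e e'; rewrite /glued !(eq_sym (state _ e)). Qed.

Lemma state_glued b e e' : state b e = state b e' -> glued e e'.
Proof. by case: b => same; rewrite /glued same eqxx ?orbT. Qed.

Lemma state_tend b e e' : state b e = state b e' -> tend b (col e) = tend b (col e').
Proof. by move/(congr1 snd). Qed.

Lemma state_col_inj b e e' : state b e = state b e' -> col e = col e' -> e = e'.
Proof.
case=> same_end same_rank _ same_col.
set S := colour_class b (gend b e) (col e).
have Se : e \in enum S by rewrite mem_enum inE !eqxx.
have Se' : e' \in enum S by rewrite mem_enum inE same_end same_col !eqxx.
have {}same_rank : index e (enum S) = index e' (enum S).
  by move: same_rank; rewrite /rank -same_end -same_col.
by rewrite -(nth_index e Se) same_rank nth_index.
Qed.

Lemma card_colour_classA v j : #|colour_class true (inl v) j| = dcolA ea col v j.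
Proof. by apply: eq_card => e; rewrite !inE. Qed.

Lemma card_colour_classB v j : #|colour_class false (inr v) j| = dcolB eb col v j.
Proof. by apply: eq_card => e; rewrite !inE. Qed.

Lemma card_colour_class_eq b e j k :
  tend b j = tend b k -> #|colour_class b (gend b e) j| = #|colour_class b (gend b e) k|.
Proof.
have [-> //|neq_jk same_end] := eqVneq j k.
have nonleaf := bend_not_leaf neq_jk same_end.
case: equitable_col => eqA eqB; case: b same_end nonleaf => -[same_end] nonleaf.
  by rewrite !card_colour_classA (eqA _ _ nonleaf j k erefl (esym same_end)).
by rewrite !card_colour_classB (eqB _ _ nonleaf j k erefl (esym same_end)).
Qed.

Lemma exists_partner b e k :
  tend b k = tend b (col e) -> exists2 e', state b e' = state b e & col e' = k.
Proof.
move=> same_end; set S' := colour_class b (gend b e) k.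
have rank_lt : rank b e < size (enum S').
  rewrite -cardE (card_colour_class_eq e same_end) cardE index_mem.
  by rewrite mem_enum inE !eqxx.
exists (nth e (enum S') (rank b e)); last first.
  by have := mem_nth e rank_lt; rewrite mem_enum inE => /andP[_ /eqP].
have := mem_nth e rank_lt; rewrite mem_enum inE => /andP[/eqP end_e' /eqP col_e'].
by rewrite /state /rank end_e' col_e' same_end index_uniq ?enum_uniq.
Qed.

Definition walk n (f : nat -> E) := forall i, i < n -> glued (f i) (f i.+1).

Lemma walk_sub n f i j : walk n f -> i <= j <= n -> walk (j - i) (fun k => f (i + k)).
Proof.
move=> walk_f /andP[le_ij le_jn] k lt_k /=; rewrite addnS; apply: walk_f.
by rewrite (leq_trans _ le_jn) // -(subnKC le_ij) ltn_add2l.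
Qed.

Section Walks.
Variables (n : nat) (f : nat -> E).
Hypothesis walk_f : walk n f.

Definition step_side i := state true (f i) == state true (f i.+1).

Lemma step_state i : i < n -> state (step_side i) (f i) = state (step_side i) (f i.+1).
Proof. by move/walk_f; rewrite /step_side /glued; case: eqP => //= _ /eqP. Qed.

Lemma walk_connect (D : {set 'I_m}) :
  (forall k, 0 < k < n -> col (f k) \in D) -> forall i, i < n ->
  connect (Tadj D) (tend (step_side 0) (col (f 0))) (tend (step_side i) (col (f i))).
Proof.
move=> inD; elim=> [|i IH] lt_i_n; first exact: connect0.
apply: connect_trans (IH (ltnW lt_i_n)) _.
rewrite (state_tend (step_state (ltnW lt_i_n))).
by apply: connect_bend; apply: inD; rewrite lt_i_n.
Qed.

(* Otherwise the walk would join the two ends of col (f 0) in T without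
   using col (f 0). *)
Lemma walk_returns b : 0 < n -> step_side 0 = ~~ b ->
  tend b (col (f n)) = tend b (col (f 0)) ->
  exists2 i, 0 < i <= n & col (f i) = col (f 0).
Proof.
move=> n_gt0 side0 same_end.
pose returns (i : 'I_n.+1) := (0 < i) && (col (f i) == col (f 0)).
have [i /andP[i_gt0 /eqP col_i]|noreturn] := pickP returns.
  by exists i => //; rewrite i_gt0; exact: ltn_ord i.
have inD k : 0 < k <= n -> col (f k) \in setT :\ col (f 0).
  move=> /andP[k_gt0 k_le_n]; rewrite !inE andbT; apply/eqP => col_k.
  by have := noreturn (Ordinal (k_le_n : k < n.+1)); rewrite /returns /= k_gt0 col_k eqxx.
have lt_pred : n.-1 < n by rewrite prednK.
have inner k : 0 < k < n -> col (f k) \in setT :\ col (f 0).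
  by case/andP=> k_gt0 k_lt_n; rewrite inD // k_gt0 ltnW.
have := walk_connect inner lt_pred.
rewrite (state_tend (step_state lt_pred)) prednK // side0 => path_c0.
have c_n_in : col (f n) \in setT :\ col (f 0) by apply: inD; rewrite n_gt0 leqnn.
have := connect_trans path_c0 (connect_bend _ _ _ b c_n_in).
rewrite same_end => cycle_c0.
by have := bacyclic_bend (col (f 0)) (~~ b) treeT.2; rewrite negbK cycle_c0.
Qed.
End Walks.

(* If the first step is glued at side [~~ b], the walk comes back to the
   colour of its first edge (walk_returns) and, by induction, to that very
   edge. *)
Lemma walk_state n f : walk n f -> forall b,
  tend b (col (f 0)) = tend b (col (f n)) -> state b (f 0) = state b (f n).
Proof.
elim/ltn_ind: n f => n IH f walk_f b same_end.
have sub i j b' : i <= j <= n -> j - i < n ->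
    tend b' (col (f i)) = tend b' (col (f j)) -> state b' (f i) = state b' (f j).
  move=> ij_range lt_n; have := IH _ lt_n _ (walk_sub walk_f ij_range) b'.
  by case/andP: ij_range => le_ij _; rewrite addn0 subnKC.
case: n => [//|n] in IH walk_f same_end sub *.
have step0 := step_state walk_f (ltn0Sn n).
have [side0|side0] : step_side f 0 = b \/ step_side f 0 = ~~ b
    by case: (step_side f 0); case: (b); auto.
  rewrite side0 in step0; rewrite step0.
  by apply: sub; [lia | lia | rewrite -(state_tend step0)].
have [i /andP[i_gt0 le_in] col_i] := walk_returns walk_f (ltn0Sn n) side0 (esym same_end).
rewrite side0 in step0.
have f0_fi : f 0 = f i.
  apply: (state_col_inj (b := ~~ b)) (esym col_i); rewrite step0.
  by apply: sub; [lia | lia | rewrite col_i -(state_tend step0)].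
by rewrite f0_fi; apply: sub; [lia | lia | rewrite col_i].
Qed.

Lemma connect_glued_col_inj e e' : connect glued e e' -> col e = col e' -> e = e'.
Proof.
case/connectP=> p glued_p -> same_col.
have walk_p : walk (size p) (fun i => nth e (e :: p) i) by move=> i; apply: (pathP e glued_p).
have := walk_state walk_p (b := true); rewrite /= -[size p]/((size (e :: p)).-1) nth_last /=.
by rewrite same_col => /(_ erefl) /state_col_inj; apply.
Qed.

Definition reached e0 (y : TA + TB) :=
  forall b j, tend b j = y -> exists2 e, connect glued e0 e & col e = j.

Lemma reached_col e0 e b : connect glued e0 e -> reached e0 (tend b (col e)).
Proof.
move=> e0_e b' j same_end; have side_eq := bend_side same_end; subst b'.
have [e' state_e' col_e'] := exists_partner same_end.
by exists e' => //; apply: connect_trans e0_e (connect1 (state_glued (esym state_e'))).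
Qed.

Lemma reached_adj e0 y z : reached e0 y -> Tadj setT y z -> reached e0 z.
Proof.
move=> + /existsP[c /andP[_ adj_yz]].
have [b [-> ->]] : exists b, y = tend b c /\ z = tend (~~ b) c.
  by case/orP: adj_yz => /andP[/eqP -> /eqP ->]; [exists true | exists false].
move=> reached_y; have [e e0_e col_e] := reached_y b c erefl.
by rewrite -col_e; exact: reached_col.
Qed.

Lemma connect_glued_col e0 j : exists2 e, connect glued e0 e & col e = j.
Proof.
have [p adj_p end_p] := connectP (treeT.1 (tend true (col e0)) (tend true j)).
suff : reached e0 (tend true j) by apply.
rewrite end_p; have := reached_col (b := true) (connect0 glued e0).
elim: p (tend true (col e0)) adj_p {end_p} => [//|z p IH] y /= /andP[adj_yz adj_p] reached_y.
exact: IH adj_p (reached_adj reached_y adj_yz).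
Qed.

Lemma glued_class_hom_copy e0 : hom_copy ta tb ea eb [set e | connect glued e0 e].
Proof.
pose phi i := odflt e0 [pick e | connect glued e0 e && (col e == i)].
have phiP i : connect glued e0 (phi i) /\ col (phi i) = i.
  rewrite /phi; case: pickP => [e /andP[e0_e /eqP] //|none].
  have [e e0_e col_e] := connect_glued_col e0 i.
  by have := none e; rewrite e0_e col_e eqxx.
have class_inj e e' : connect glued e0 e -> connect glued e0 e' -> col e = col e' -> e = e'.
  move=> e0_e e0_e'; apply: connect_glued_col_inj; apply: connect_trans e0_e'.
  by rewrite (sym_connect_sym glued_sym).
have phi_state b i i' : tend b i' = tend b i -> state b (phi i') = state b (phi i).
  rewrite -{1}(phiP i).2 => /exists_partner[e state_e col_e].
  suff -> : phi i' = e by [].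
  apply: class_inj (phiP i').1 _ _; last by rewrite col_e (phiP i').2.
  exact: connect_trans (phiP i).1 (connect1 (state_glued (esym state_e))).
pose side (x : TA + TB) := if x is inl _ then true else false.
pose f x := if [pick i | tend (side x) i == x] is Some i then gend (side x) (phi i)
            else gend true e0.
have f_tend b i : f (tend b i) = gend b (phi i).
  have side_tend : side (tend b i) = b by case: b.
  rewrite /f side_tend; case: pickP => [i' /eqP/phi_state same_state|none].
    by case: same_state.
  by have := none i; rewrite eqxx.
exists phi, f; split.
- by move=> i i' same_phi; rewrite -(phiP i).2 same_phi (phiP i').2.
- apply/setP => e; rewrite inE; apply/imsetP/idP => [[i _ ->]|e0_e].
    exact: (phiP i).1.
  by exists (col e) => //; apply: class_inj e0_e (phiP _).1 _; rewrite (phiP _).2.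
- by move=> i; left; split; [exact: (f_tend true i) | exact: (f_tend false i)].
Qed.

Lemma glued_decomposition : Tstar_decomposition ta tb ea eb.
Proof.
exists (equivalence_partition (connect glued) setT); split.
  apply: equivalence_partitionP => x y z _ _ _; split; first exact: connect0.
  move=> x_y; apply/idP/idP; last exact: connect_trans.
  by apply: connect_trans; rewrite (sym_connect_sym glued_sym).
move=> S /imsetP[e0 _ ->].
have -> : [set e in setT | connect glued e0 e] = [set e | connect glued e0 e].
  by apply/setP => e; rewrite !inE.
exact: glued_class_hom_copy.
Qed.
End Gluing.

Theorem lemma12 (TA TB : finType) (m : nat) (ta : 'I_m -> TA) (tb : 'I_m -> TB)
  (hT : is_tree ta tb) (hleaf : exists y : TB, is_leaf ta tb (inr y))
  (VA VB E : finType) (ea : E -> VA) (eb : E -> VB)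
  (hcol : exists col : E -> 'I_m, T_equitable ta tb ea eb col) :
  Tstar_decomposition ta tb ea eb.
Proof. by case: hcol => col equitable_col; exact: glued_decomposition hT equitable_col. Qed.
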